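(* Let $G$ be a graph. Then $\mathrm{diam}(G)\le 3$ if and only if every independent set of $G$ is a general position set of $G$.
   Context: All graphs are finite, simple and connected; $\mathrm{diam}(G)$ is the maximum distance between two vertices. A set $S$ of vertices is a general position set if no three vertices of $S$ lie on a common geodesic (shortest path) of $G$. *)

From mathcomp Require Import all_boot.
Set Implicit Arguments. Unset Strict Implicit. Unset Printing Implicit Defensive.

Definition simple_graph (T : finType) (e : rel T) : Prop :=
  symmetric e /\ irreflexive e.

(* A walk from x to y of length n: a sequence p with x :: p an e-path
   ending in y, and size p = n. *)
Definition walk (T : finType) (e : rel T) (x y : T) (p : seq T) : bool :=
  path e x p && (last x p == y).

Definition connected_graph (T : finType) (e : rel T) : Prop :=
  forall x y : T, exists p, walk e x y p.

Definition dist_le (T : finType) (e : rel T) (x y : T) (n : nat) : Prop :=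
  exists p, walk e x y p /\ size p <= n.

Definition dist_eq (T : finType) (e : rel T) (x y : T) (n : nat) : Prop :=
  dist_le e x y n /\ forall m, dist_le e x y m -> n <= m.

Definition diam_le (T : finType) (e : rel T) (d : nat) : Prop :=
  forall x y : T, dist_le e x y d.

Definition geodesic (T : finType) (e : rel T) (x y : T) (p : seq T) : Prop :=
  walk e x y p /\ dist_eq e x y (size p).

Definition independent (T : finType) (e : rel T) (S : {set T}) : Prop :=
  forall u v, u \in S -> v \in S -> ~~ e u v.

Definition general_position (T : finType) (e : rel T) (S : {set T}) : Prop :=
  forall u v w, u \in S -> v \in S -> w \in S ->
    u != v -> v != w -> u != w ->
    ~ (exists x y p, geodesic e x y p /\
         u \in x :: p /\ v \in x :: p /\ w \in x :: p).

(** An independent set contains no two consecutive vertices of a path, so it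
    meets a path with n vertices in at most (n + 1) / 2 of them; when the
    diameter is at most 3 a geodesic has at most four vertices, so no
    independent set has three of its vertices on it.  Conversely, if two
    vertices are at distance at least 4, the vertices at positions 0, 2 and 4
    of a geodesic joining them are pairwise distinct and non-adjacent (an edge
    or a coincidence would shortcut the geodesic), so they form an independent
    set that is not in general position. *)

From mathcomp Require Import all_boot zify.

Set Implicit Arguments.
Unset Strict Implicit.
Unset Printing Implicit Defensive.

Section Geodesics.

Variables (T : finType) (e : rel T).

Lemma geodesic_exists x y p0 : walk e x y p0 -> exists p, geodesic e x y p.
Proof.
move=> walk_p0.
have has_walk : exists n, [exists t : n.-tuple T, walk e x y t].
  by exists (size p0); apply/existsP; exists (in_tuple p0).
case: (ex_minnP has_walk) => n /existsP[p walk_p] min_n.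
exists p; split=> //; split; first by exists p; rewrite size_tuple.
move=> m [q [walk_q le_qm]]; rewrite size_tuple; apply: leq_trans le_qm.
by apply: min_n; apply/existsP; exists (in_tuple q).
Qed.

Lemma geodesic_min x y p q : geodesic e x y p -> walk e x y q -> size p <= size q.
Proof. by move=> [_ [_ min_p]] walk_q; apply: min_p; exists q. Qed.

Lemma geodesic_shortcut x y p1 p2 p3 :
  geodesic e x y (p1 ++ p2 ++ p3) -> 1 < size p2 ->
  last x p1 != last (last x p1) p2 /\ ~~ e (last x p1) (last (last x p1) p2).
Proof.
set u := last x p1; set v := last u p2 => geo size_p2.
have [/andP[/andP[path_p1 _] path_p3] last_p3] : (path e x p1 && path e u p2 && path e v p3)
    /\ last v p3 == y.
  by case: geo => /andP[]; rewrite !cat_path !last_cat -/u -/v => /andP[-> ->] ->.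
have too_short q : walk e x y q -> size q < size (p1 ++ p2 ++ p3) -> False.
  by move=> walk_q; rewrite ltnNge (geodesic_min geo walk_q).
split; apply/negP.
- move=> /eqP eq_uv; apply: (too_short (p1 ++ p3)); last by rewrite !size_cat; lia.
  by rewrite /walk cat_path last_cat path_p1 -/u eq_uv path_p3.
- move=> e_uv; apply: (too_short (p1 ++ v :: p3)); last by rewrite !size_cat /=; lia.
  by rewrite /walk cat_path last_cat /= path_p1 -/u e_uv path_p3.
Qed.

Lemma independent_count_path S x p : independent e S -> path e x p ->
  (count (mem S) (x :: p)).*2 <= size p + 1 + (x \in S).
Proof.
move=> indS; elim: p x => [|y p IHp] x /=; first by case: (x \in S).
case/andP=> e_xy path_p; have := IHp y path_p; rewrite /=.
case Sx: (x \in S); case Sy: (y \in S) => //=; try lia.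
by have := indS x y Sx Sy; rewrite e_xy.
Qed.

Lemma independent_on_path S x p s : independent e S -> path e x p ->
  uniq s -> {subset s <= S} -> {subset s <= x :: p} -> (size s).*2 <= (size p).+2.
Proof.
move=> indS path_p uniq_s sS sp.
have s_in_filter : {subset s <= filter (mem S) (x :: p)}.
  by move=> z zs; rewrite mem_filter; apply/andP; split; [apply: sS | apply: sp].
have := uniq_leq_size uniq_s s_in_filter; rewrite size_filter.
by have := independent_count_path indS path_p; case: (x \in S) => /=; lia.
Qed.

Lemma independent_set3 u v w : simple_graph e ->
  ~~ e u v -> ~~ e v w -> ~~ e u w -> independent e [set u; v; w].
Proof.
move=> [sym_e irr_e] nuv nvw nuw a b; rewrite !inE -!orbA.
by do 2![case/or3P=> /eqP->]; rewrite ?irr_e // sym_e.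
Qed.

End Geodesics.

Theorem corollary4p3 (T : finType) (e : rel T) :
  simple_graph e -> connected_graph e ->
  (diam_le e 3 <-> forall S : {set T}, independent e S -> general_position e S).
Proof.
move=> simple_e connected_e; split.
- move=> diam3 S indS u v w Su Sv Sw uv vw uw [x [y [p [geo [ux [vx wx]]]]]].
  have size_p : size p <= 3 by case: geo => _ [_]; apply.
  have uniq_uvw : uniq [:: u; v; w] by rewrite /= !inE !negb_or uv uw vw.
  have S_uvw : {subset [:: u; v; w] <= S} by move=> z; rewrite !inE => /or3P[] /eqP->.
  have p_uvw : {subset [:: u; v; w] <= x :: p} by move=> z; rewrite !inE => /or3P[] /eqP->.
  by have := independent_on_path indS (andP geo.1).1 uniq_uvw S_uvw p_uvw => /=; lia.
- move=> gen_pos x y; have [p0 walk_p0] := connected_e x y.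
  have [p geo] := geodesic_exists walk_p0.
  case: (leqP (size p) 3) => [|long_p]; first by exists p; case: geo.
  exfalso; case: p long_p geo => [|a [|b [|c [|d q]]]] // _ geo.
  have [xb nxb] := geodesic_shortcut (p1 := [::]) (p2 := [:: a; b]) geo isT.
  have [bd nbd] := geodesic_shortcut (p1 := [:: a; b]) (p2 := [:: c; d]) geo isT.
  have [xd nxd] := geodesic_shortcut (p1 := [::]) (p2 := [:: a; b; c; d]) geo isT.
  apply: (gen_pos _ (independent_set3 simple_e nxb nbd nxd) x b d) => //;
    rewrite ?inE ?eqxx ?orbT //.
  by exists x, y, [:: a, b, c, d & q]; rewrite !inE !eqxx !orbT.
Qed.
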